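(* Let $n, r$ be positive integers with $n\geqslant\lceil r/2\rceil+2$. Then $m(L(K_n),r)\geqslant\lfloor (r+2)^2/8\rfloor$.
   Context: All graphs are finite, simple and undirected. For a nonnegative integer $r$ and a graph $G$, the $r$-neighbor bootstrap percolation process on $G$ starts with a set $A_0\subseteq V(G)$ of initially active vertices, and for $i\geqslant 1$, $A_i=A_{i-1}\cup\{v\in V(G) : |N(v)\cap A_{i-1}|\geqslant r\}$, where $N(v)$ is the set of neighbors of $v$. The set $A_0$ is a percolating set if $\bigcup_{i\geqslant 0}A_i=V(G)$; $m(G,r)$ is the minimum size of a percolating set. $L(G)$ is the line graph of $G$ (vertex set $E(G)$, two vertices adjacent iff the edges share an endpoint), and $K_n$ is the complete graph on $n$ vertices. *)

From mathcomp Require Import all_boot.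
From mathcomp Require Import boolp.
Set Implicit Arguments. Unset Strict Implicit. Unset Printing Implicit Defensive.

(* A finite simple graph: vertex type T with adjacency relation e
   (assumed symmetric and irreflexive where it matters). *)

Definition nbhd (T : finType) (e : rel T) (v : T) : {set T} := [set u | e v u].

Definition bp_step (T : finType) (e : rel T) (r : nat) (A : {set T}) : {set T} :=
  A :|: [set v | r <= #|nbhd e v :&: A|].

Definition bp_iter (T : finType) (e : rel T) (r : nat) (A0 : {set T}) (i : nat) :=
  iter i (bp_step e r) A0.

(* A0 percolates iff the union of all A_i is V(G), i.e. some A_i = V(G)
   (the A_i are increasing). *)
Definition percolating (T : finType) (e : rel T) (r : nat) (A0 : {set T}) : Prop :=
  forall v : T, exists i, v \in bp_iter e r A0 i.

(* m(G, r): the minimum size of a percolating set.  V(G) itself percolates,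
   so taking the min with default #|T| gives exactly the minimum. *)
Definition m_perc (T : finType) (e : rel T) (r : nat) : nat :=
  \big[minn/#|T|]_(A : {set T} | `[< percolating e r A >]) #|A|.

(* The line graph of K_n: vertices are the edges of K_n, i.e. 2-element subsets
   of 'I_n; two are adjacent iff they are distinct and share an endpoint. *)
Definition KnEdge (n : nat) := {S : {set 'I_n} | #|S| == 2}.

Definition LKn_adj (n : nat) : rel (KnEdge n) :=
  fun x y => (x != y) && ~~ [disjoint val x & val y].

From mathcomp Require Import all_boot zify.
From mathcomp Require Import boolp.
Set Implicit Arguments. Unset Strict Implicit. Unset Printing Implicit Defensive.

(* Induction on r, restricting the process to the edges of a clique K_W.
   If A does not contain all of K_W, some edge f = {a, b} of K_W becomes
   active in the first round, so f has at least r active neighbours, all of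
   them touching f.  Deleting a and b leaves the clique K_(W - f), on which
   the restricted process still percolates with threshold r - 4, because an
   edge disjoint from f has only four neighbours touching f.  Hence
   |A ∩ K_W| >= r + |A ∩ K_(W - f)| >= r + (r - 2)^2/8 = (r + 2)^2/8; the
   base case A ⊇ K_W is the bound C(|W|, 2) >= (r + 2)^2/8. *)

Section BootstrapOn.

Variables (T : finType) (adj : rel T).

Definition bp_step_on (D : {set T}) (q : nat) (B : {set T}) : {set T} :=
  B :|: [set v in D | q <= #|nbhd adj v :&: B|].

Definition bp_iter_on (D : {set T}) (q : nat) (A : {set T}) (i : nat) : {set T} :=
  iter i (bp_step_on D q) (A :&: D).

Definition percolating_on (D : {set T}) (q : nat) (A : {set T}) : Prop :=
  forall v, v \in D -> exists i, v \in bp_iter_on D q A i.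

Lemma bp_iter_onS (D : {set T}) q (A : {set T}) i :
  bp_iter_on D q A i.+1 = bp_step_on D q (bp_iter_on D q A i).
Proof. by []. Qed.

Lemma bp_iter_on_sub (D : {set T}) q (A : {set T}) i : bp_iter_on D q A i \subset D.
Proof.
elim: i => [|i IHi]; first exact: subsetIr.
rewrite bp_iter_onS /bp_step_on subUset IHi.
by apply/subsetP => v; rewrite inE => /andP[].
Qed.

Lemma bp_iter_onT q (A : {set T}) i : bp_iter_on [set: T] q A i = bp_iter adj q A i.
Proof.
elim: i => [|i IHi]; first by rewrite /bp_iter_on /= setIT.
by rewrite bp_iter_onS IHi; apply/setP => v; rewrite !inE.
Qed.

Lemma percolating_onT q (A : {set T}) : percolating adj q A -> percolating_on [set: T] q A.
Proof. by move=> percA v _; have [i vi] := percA v; exists i; rewrite bp_iter_onT. Qed.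

Lemma bp_on_first_step (D : {set T}) q (A : {set T}) :
  percolating_on D q A -> ~~ (D \subset A) ->
  exists2 f, f \in D :\: A & q <= #|nbhd adj f :&: (A :&: D)|.
Proof.
move=> perc; apply: contraNP => stuck; apply/subsetP => v vD.
have fixA : bp_step_on D q (A :&: D) = A :&: D.
  apply/setUidPl/subsetP => f; rewrite inE => /andP[fD hf].
  rewrite inE fD andbT; apply/negPn/negP => fA.
  by apply: stuck; exists f => //; exact/setDP.
have [i] := perc v vD.
by rewrite /bp_iter_on (iter_fix _ fixA) => /setIP[].
Qed.

(* Once D' is cut out of D, a vertex of D' loses at most k active
   neighbours, so lowering the threshold by k keeps it activated. *)
Lemma bp_iter_on_restrict (D D' : {set T}) q k (A : {set T}) :
  D' \subset D -> (forall x, x \in D' -> #|nbhd adj x :&: (D :\: D')| <= k) ->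
  forall i, bp_iter_on D q A i :&: D' \subset bp_iter_on D' (q - k) A i.
Proof.
move=> sD'D few; elim=> [|i IHi].
  by apply/subsetP => x; rewrite !inE => /andP[/andP[-> _] ->].
apply/subsetP => x /setIP[+ xD']; rewrite bp_iter_onS inE => /orP[xB|].
  by rewrite bp_iter_onS inE (subsetP IHi) // inE xB.
rewrite inE => /andP[_ hx]; rewrite bp_iter_onS inE; apply/orP; right.
rewrite inE xD' leq_subLR; apply: leq_trans hx _; rewrite addnC.
set Nx := nbhd adj x.
apply: (@leq_trans #|(Nx :&: bp_iter_on D' (q - k) A i) :|: (Nx :&: (D :\: D'))|).
  apply/subset_leq_card/subsetP => y /setIP[yx yB].
  have yD := subsetP (bp_iter_on_sub D q A i) y yB.
  have [yD'|yD'] := boolP (y \in D').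
    by rewrite inE inE yx (subsetP IHi) // inE yB.
  by rewrite inE orbC inE yx !inE yD' yD.
exact: leq_trans (leq_card_setU _ _) (leq_add (leqnn _) (few x xD')).
Qed.

Lemma percolating_on_restrict (D D' : {set T}) q k (A : {set T}) :
  D' \subset D -> (forall x, x \in D' -> #|nbhd adj x :&: (D :\: D')| <= k) ->
  percolating_on D q A -> percolating_on D' (q - k) A.
Proof.
move=> sD'D few percA v vD'; have [i vi] := percA v (subsetP sD'D v vD').
by exists i; apply: (subsetP (bp_iter_on_restrict q A sD'D few i)); rewrite inE vi.
Qed.

Lemma m_perc_ge r b :
  b <= #|T| -> (forall A, percolating adj r A -> b <= #|A|) -> b <= m_perc adj r.
Proof.
move=> bT bA; rewrite /m_perc; elim/big_ind: _ => // [x y bx by'|A /asboolP/bA //].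
by rewrite leq_min bx.
Qed.

End BootstrapOn.

Lemma sqr_div8_le_bin2 q w : (q + 1) %/ 2 + 2 <= w -> (q + 2) ^ 2 %/ 8 <= 'C(w, 2).
Proof. rewrite bin2; nia. Qed.

Lemma sqr_div8_rec q : (q + 2) ^ 2 %/ 8 <= (q - 4 + 2) ^ 2 %/ 8 + q.
Proof. nia. Qed.

Section CliqueEdges.

Variable n : nat.

Definition edges_in (W : {set 'I_n}) : {set KnEdge n} := [set e : KnEdge n | val e \subset W].

Lemma edges_inT : edges_in [set: 'I_n] = [set: KnEdge n].
Proof. by apply/setP => e; rewrite !inE subsetT. Qed.

Lemma edges_inS (W W' : {set 'I_n}) : W' \subset W -> edges_in W' \subset edges_in W.
Proof. by move=> sW'W; apply/subsetP => e; rewrite !inE => /subset_trans; apply. Qed.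

Lemma card_edges_in (W : {set 'I_n}) : #|edges_in W| = 'C(#|W|, 2).
Proof.
rewrite -cards_draws -(card_imset _ val_inj); apply: eq_card => S.
rewrite inE; apply/imsetP/andP => [[e] | [SW S2]].
  by rewrite inE => eW ->; rewrite eW (valP e).
by exists (exist _ S S2); rewrite // inE.
Qed.

Lemma card_edges_meeting (X Y : {set 'I_n}) : [disjoint X & Y] ->
  #|[set h : KnEdge n | ~~ [disjoint val h & X] && ~~ [disjoint val h & Y]]|
    <= #|X| * #|Y|.
Proof.
move=> dXY; rewrite -(card_imset _ val_inj) -cardsX.
apply: leq_trans (leq_imset_card (fun p : 'I_n * 'I_n => [set p.1; p.2]) _).
apply/subset_leq_card/subsetP => S /imsetP[h]; rewrite inE => /andP[hX hY] ->.
move: hX hY; rewrite -!setI_eq0 => /set0Pn[u /setIP[uh uX]] /set0Pn[v /setIP[vh vY]].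
have uv : u != v.
  apply: contraTneq dXY => Euv; rewrite -setI_eq0; apply/set0Pn.
  by exists u; rewrite inE uX Euv vY.
apply/imsetP; exists (u, v); first by rewrite inE /= uX vY.
apply/eqP; rewrite /= eq_sym eqEcard subUset !sub1set uh vh /=.
by rewrite cards2 uv (eqP (valP h)).
Qed.

Section DeleteEdge.

Variables (W : {set 'I_n}) (f : KnEdge n).
Let W' := W :\: val f.

Lemma card_delete_edge : f \in edges_in W -> #|W'| = #|W| - 2.
Proof. by rewrite inE cardsD => /setIidPr ->; rewrite (eqP (valP f)). Qed.

Lemma edges_in_delete_edge (h : KnEdge n) :
  h \in edges_in W -> (h \in edges_in W') = [disjoint val h & val f].
Proof. by rewrite !inE /W' setDE subsetI -disjoints_subset => ->. Qed.

Lemma card_nbhd_delete_edge (x : KnEdge n) : x \in edges_in W' ->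
  #|nbhd (@LKn_adj n) x :&: (edges_in W :\: edges_in W')| <= 4.
Proof.
move=> xW'; have xW := subsetP (edges_inS (subsetDl W (val f))) x xW'.
have dxf : [disjoint val x & val f] by rewrite -edges_in_delete_edge.
have := card_edges_meeting dxf; rewrite (eqP (valP x)) (eqP (valP f)).
apply: leq_trans.
apply/subset_leq_card/subsetP => h /setIP[+ /setDP[hW hW']].
rewrite /nbhd inE /LKn_adj => /andP[_ dxh].
by rewrite inE disjoint_sym dxh -edges_in_delete_edge.
Qed.

Lemma card_edges_in_delete_edge (A : {set KnEdge n}) :
  #|A :&: edges_in W'| + #|nbhd (@LKn_adj n) f :&: (A :&: edges_in W)|
    <= #|A :&: edges_in W|.
Proof.
rewrite -(cardsID (edges_in W') (A :&: edges_in W)) leq_add //.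
  apply/subset_leq_card/subsetP => h /setIP[hA hW'].
  by rewrite !in_setI hA hW' (subsetP (edges_inS (subsetDl W (val f)))).
apply/subset_leq_card/subsetP => h /setIP[+ hAW]; rewrite /nbhd inE /LKn_adj.
move=> /andP[_ dfh]; move: (hAW) => /setIP[_ hW].
by rewrite in_setD hAW edges_in_delete_edge // disjoint_sym dfh.
Qed.

End DeleteEdge.

End CliqueEdges.

Lemma clique_percolation_bound n q (W : {set 'I_n}) (A : {set KnEdge n}) :
  (q + 1) %/ 2 + 2 <= #|W| ->
  percolating_on (@LKn_adj n) (edges_in W) q A ->
  (q + 2) ^ 2 %/ 8 <= #|A :&: edges_in W|.
Proof.
elim/ltn_ind: q W A => q IHq W A hW perc.
have [sWA|] := boolP (edges_in W \subset A).
  by rewrite (setIidPr sWA) card_edges_in; exact: sqr_div8_le_bin2.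
case/(bp_on_first_step perc) => f /setDP[fW _] hf.
pose W' := W :\: val f.
have percW' : percolating_on (@LKn_adj n) (edges_in W') (q - 4) A.
  apply: percolating_on_restrict perc; first exact/edges_inS/subsetDl.
  exact: card_nbhd_delete_edge.
have IH : (q - 4 + 2) ^ 2 %/ 8 <= #|A :&: edges_in W'|.
  have [q_small|q_large] := ltnP q 4; first by rewrite (_ : q - 4 = 0) //; lia.
  apply: IHq percW'; first lia.
  by rewrite card_delete_edge //; lia.
apply: leq_trans (sqr_div8_rec q) (leq_trans _ (card_edges_in_delete_edge W f A)).
exact: leq_add IH hf.
Qed.

Theorem lemma5p3 (n r : nat) :
  0 < n -> 0 < r -> (r + 1) %/ 2 + 2 <= n ->
  (r + 2) ^ 2 %/ 8 <= m_perc (@LKn_adj n) r.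
Proof.
move=> _ _ hn; have cardW : #|[set: 'I_n]| = n by rewrite cardsT card_ord.
apply: m_perc_ge => [|A percA].
  by rewrite -cardsT -edges_inT card_edges_in cardW; exact: sqr_div8_le_bin2.
rewrite -(setIT A) -edges_inT; apply: clique_percolation_bound; first by rewrite cardW.
by rewrite edges_inT; exact: percolating_onT.
Qed.
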